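(* Let $k\in\mathbb{N}_0$ and $f(s)=(s-1/2-k)\,\Gamma(1/2-s)$. Then for every $j\in\mathbb{N}$, \[ \lim_{s\to 1/2+k}f^{(j)}(s)=(-1)^{k+j-1}\,j!\sum_{\ell_1+\ell_2+\dots+\ell_{k+1}=j}\frac{\Gamma^{(\ell_{k+1})}(1)}{\ell_{k+1}!}\prod_{i=1}^{k}(k-i+1)^{-(\ell_i+1)}. \]
   Context: $f^{(j)}$ and $\Gamma^{(\ell)}$ denote derivatives; the sum ranges over tuples $(\ell_1,\dots,\ell_{k+1})$ of nonnegative integers with sum $j$; empty products equal $1$. *)

From Stdlib Require Import Reals List Factorial.
From Coquelicot Require Import Coquelicot.
Import ListNotations.
Open Scope R_scope.

(* Euler's integral, used for x > 0:  Gamma(x) = int_0^oo t^(x-1) e^(-t) dt. *)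
Definition Gamma_pos (x : R) : R :=
  RInt_gen (fun t => Rpower t (x - 1) * exp (- t)) (at_right 0) (Rbar_locally p_infty).

Definition rising (x : R) (n : nat) : R :=
  fold_right Rmult 1 (map (fun i => x + INR i) (seq 0 n)).

(* The Gamma function on R, meromorphically continued through the functional
   equation Gamma(x) = Gamma(x+n) / (x (x+1) ... (x+n-1)), with n chosen so
   that x + n > 0.  At the poles (x in {0,-1,-2,...}) the value is junk. *)
Definition Gamma (x : R) : R :=
  let n := Z.to_nat (up (- x)) in Gamma_pos (x + INR n) / rising x n.

(* compositions m j = list of all tuples (l_1,...,l_m) of nonnegative
   integers with l_1 + ... + l_m = j (each exactly once). *)
Fixpoint compositions (m j : nat) : list (list nat) :=
  match m with
  | O => if Nat.eqb j 0 then [nil] else nil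
  | S m' => flat_map (fun a => map (cons a) (compositions m' (j - a))) (seq 0 (S j))
  end.

Definition sumR (l : list R) : R := fold_right Rplus 0 l.
Definition prodR (l : list R) : R := fold_right Rmult 1 l.

(* Summand for a tuple l = [l_1; ...; l_{k+1}]:
   Gamma^(l_{k+1})(1) / l_{k+1}! * prod_{i=1}^k (k-i+1)^(-(l_i+1)). *)
Definition lemma3_term (k : nat) (l : list nat) : R :=
  Derive_n Gamma (nth k l O) 1 / INR (fact (nth k l O)) *
  prodR (map (fun i => / (INR (k - i + 1)) ^ (S (nth (i - 1) l O))) (seq 1 k)).

Definition lemma3_rhs (k j : nat) : R :=
  (-1) ^ (k + j - 1) * INR (fact j) * sumR (map (lemma3_term k) (compositions (S k) j)).

(* Near [s = 1/2 + k] put [u = 1/2 + k - s].  By the functional equation,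
   [(s - 1/2 - k) Gamma(1/2 - s) = (-1)^(k+1) Gamma(1 + u) / prod_(i<k) (k - i - u)]
   for [0 < |u| < 1], and the right-hand side is smooth at [u = 0].  Hence the
   limit of the [j]-th derivative is [(-1)^j] times the [j]-th derivative of
   this product at [u = 0], which the Leibniz rule expresses through the Taylor
   coefficients [Gamma^(l)(1) / l!] and [1 / (k - i)^(l+1)] of its factors,
   summed over all compositions of [j].  Smoothness of [Gamma] on (0, +oo) comes
   from differentiating Euler's integral under the integral sign, justified by
   an integrable majorant and a quadratic Taylor remainder bound. *)

From Stdlib Require Import Reals List Lra Lia ZArith.
From Coquelicot Require Import Coquelicot.
Open Scope R_scope.

Lemma exp_le_mono x y : x <= y -> exp x <= exp y.
Proof. intros [H|H]; [apply Rlt_le, exp_increasing; exact H | subst; lra]. Qed.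

Lemma exp_INR_mul N L : exp (INR N * L) = exp L ^ N.
Proof.
  induction N as [|N IH]; [simpl; rewrite Rmult_0_l, exp_0; ring|].
  rewrite S_INR, Rmult_plus_distr_r, Rmult_1_l, exp_plus, IH. simpl. ring.
Qed.

Lemma pow_le_fact_mul_exp m x : 0 <= x -> x ^ m <= INR (fact m) * exp x.
Proof.
  intros Hx. pose proof (INR_fact_lt_0 m) as Hf.
  assert (Hterm : x ^ m / INR (fact m) <= sum_f_R0 (fun k => x ^ k / INR (fact k)) m).
  { destruct m as [|m]; simpl; [lra|].
    enough (0 <= sum_f_R0 (fun k => x ^ k / INR (fact k)) m) by lra.
    apply cond_pos_sum. intros n. apply Rmult_le_pos; [apply pow_le; lra|].
    apply Rlt_le, Rinv_0_lt_compat, INR_fact_lt_0. }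
  pose proof (exp_ge_taylor x m Hx).
  apply Rmult_le_reg_r with (/ INR (fact m)); [apply Rinv_0_lt_compat; lra|].
  replace (INR (fact m) * exp x * / INR (fact m)) with (exp x) by (field; lra).
  unfold Rdiv in Hterm. lra.
Qed.

Lemma exp_sub_1_sub_bound v : 0 <= exp v - 1 - v <= v ^ 2 * exp (Rabs v).
Proof.
  split; [pose proof (exp_ineq1_le v); lra|].
  destruct (Rle_dec 0 v) as [Hv|Hv].
  - rewrite Rabs_right by lra. pose proof (exp_pos v).
    destruct (Rle_dec 1 v); [assert (1 <= v ^ 2) by nra; nra|].
    pose proof (exp_ineq1_le (- v)) as Hneg. rewrite exp_Ropp in Hneg.
    assert (exp v * (1 - v) <= 1).
    { apply Rmult_le_reg_r with (/ exp v); [apply Rinv_0_lt_compat; lra|].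
      field_simplify; lra. }
    nra.
  - rewrite Rabs_left by lra. set (w := - v). replace v with (- w) by (unfold w; ring).
    assert (Hw : 0 < w) by (unfold w; lra).
    pose proof (exp_ineq1_le w). rewrite exp_Ropp.
    assert (/ exp w <= / (1 + w)) by (apply Rinv_le_contravar; lra).
    assert (/ (1 + w) - 1 + w <= w ^ 2).
    { replace (/ (1 + w) - 1 + w) with (w ^ 2 / (1 + w)) by (field; lra).
      apply Rmult_le_reg_r with (1 + w); [lra|]. field_simplify; nra. }
    assert (w ^ 2 <= w ^ 2 * exp w) by nra.
    lra.
Qed.

Lemma exp_abs_mul_le h c L : Rabs h <= c ->
  exp (Rabs (h * L)) <= exp (c * L) + exp (- (c * L)).
Proof.
  intros Hh. rewrite Rabs_mult. pose proof (exp_pos (c * L)). pose proof (exp_pos (- (c * L))).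
  destruct (Rle_dec 0 L).
  - rewrite (Rabs_right L) by lra.
    enough (exp (Rabs h * L) <= exp (c * L)) by lra.
    apply exp_le_mono, Rmult_le_compat_r; lra.
  - rewrite (Rabs_left L) by lra.
    enough (exp (Rabs h * - L) <= exp (- (c * L))) by lra.
    replace (- (c * L)) with (c * - L) by ring.
    apply exp_le_mono, Rmult_le_compat_r; lra.
Qed.

Lemma exp_mul_pow_abs_le b m L : 0 < b -> L <= 0 ->
  exp (b * L) * Rabs L ^ m <= INR (fact m) / b ^ m.
Proof.
  intros Hb HL. rewrite Rabs_left1 by lra.
  replace (b * L) with (- (b * - L)) by ring. rewrite exp_Ropp.
  pose proof (pow_le_fact_mul_exp m (b * - L) ltac:(nra)) as H.
  rewrite Rpow_mult_distr in H.
  pose proof (pow_lt b m Hb). pose proof (exp_pos (b * - L)).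
  apply Rmult_le_reg_r with (b ^ m * exp (b * - L)); [nra|].
  field_simplify; lra.
Qed.

Lemma exp_mul_pow_exp_exp_bounded c m : exists K, 0 <= K /\
  forall L, 0 <= L -> exp (c * L) * L ^ m * exp (- exp L) <= K.
Proof.
  destruct (INR_unbounded c) as [N HN].
  exists (INR (fact (N + m))). split; [apply pos_INR|]. intros L HL.
  set (t := exp L). pose proof (exp_ineq1_le L).
  assert (H1 : exp (c * L) <= t ^ N).
  { unfold t. rewrite <- exp_INR_mul. apply exp_le_mono. apply Rmult_le_compat_r; lra. }
  assert (H2 : L ^ m <= t ^ m) by (apply pow_incr; unfold t; lra).
  pose proof (pow_le_fact_mul_exp (N + m) t ltac:(unfold t; lra)) as H3.
  rewrite pow_add in H3. rewrite exp_Ropp. fold t.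
  pose proof (exp_pos t). pose proof (pow_le L m HL). pose proof (exp_pos (c * L)).
  assert (0 <= t ^ N) by (apply pow_le; unfold t; lra).
  apply Rmult_le_reg_r with (exp t); [lra|].
  rewrite Rmult_assoc, Rinv_l, Rmult_1_r by lra.
  eapply Rle_trans; [|exact H3].
  apply Rmult_le_compat; lra.
Qed.

Lemma exp_mul_ln_lt c e t : 0 < c -> 0 < e -> 0 < t -> t < exp (ln e / c) ->
  exp (c * ln t) < e.
Proof.
  intros Hc He Ht Hte. rewrite <- (exp_ln e) by auto. apply exp_increasing.
  apply ln_increasing in Hte; auto. rewrite ln_exp in Hte.
  apply Rmult_lt_reg_r with (/ c); [apply Rinv_0_lt_compat; auto|].
  replace (c * ln t * / c) with (ln t) by (field; lra). exact Hte.
Qed.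

Lemma exp_mul_ln_gt c e t : 0 < c -> 0 < e -> exp (ln e / c) < t ->
  e < exp (c * ln t).
Proof.
  intros Hc He Hte. pose proof (exp_pos (ln e / c)).
  rewrite <- (exp_ln e) by auto. apply exp_increasing.
  apply ln_increasing in Hte; auto. rewrite ln_exp in Hte.
  apply Rmult_lt_reg_r with (/ c); [apply Rinv_0_lt_compat; auto|].
  replace (c * ln t * / c) with (ln t) by (field; lra). exact Hte.
Qed.

Lemma exp_sub_1_mul_ln c t : 0 < t -> exp ((c - 1) * ln t) = exp (c * ln t) / t.
Proof.
  intros Ht. replace ((c - 1) * ln t) with (c * ln t + - ln t) by ring.
  rewrite exp_plus, exp_Ropp, exp_ln by auto. reflexivity.
Qed.

(** * Improper integrals over (0, +oo) *)

Notation at_0_plus := (at_right 0).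
Notation at_infty := (Rbar_locally p_infty).

Lemma ball_R x e y : ball x e y <-> Rabs (y - x) < e.
Proof. unfold ball; simpl; unfold AbsRing_ball, abs, minus, plus, opp; simpl. tauto. Qed.

Lemma at_0_plus_of_interval (P : R -> Prop) d :
  0 < d -> (forall t, 0 < t < d -> P t) -> at_0_plus P.
Proof.
  intros Hd H. exists (mkposreal d Hd). intros y Hy Hy0.
  pose proof (Rabs_def2 _ _ (proj1 (ball_R 0 d y) Hy)). apply H. lra.
Qed.

Lemma at_0_plus_at_infty_bounds :
  filter_prod at_0_plus at_infty (fun ab => 0 < fst ab < 1 /\ 1 < snd ab).
Proof.
  apply Filter_prod with (fun a => 0 < a < 1) (fun b => 1 < b); auto.
  - apply at_0_plus_of_interval with 1; [lra | auto].
  - exists 1. auto.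
Qed.

(* Specialisations to real functions: unification does not find the
   normed-module structure of [R] by itself. *)
Lemma is_RInt_gen_scal_R (f : R -> R) (c l : R) : is_RInt_gen f at_0_plus at_infty l ->
  is_RInt_gen (fun t => c * f t) at_0_plus at_infty (c * l).
Proof. exact (@is_RInt_gen_scal R_NormedModule at_0_plus at_infty _ _ f c l). Qed.

Lemma is_RInt_gen_plus_R (f g : R -> R) (l1 l2 : R) :
  is_RInt_gen f at_0_plus at_infty l1 -> is_RInt_gen g at_0_plus at_infty l2 ->
  is_RInt_gen (fun t => f t + g t) at_0_plus at_infty (l1 + l2).
Proof. exact (@is_RInt_gen_plus R_NormedModule at_0_plus at_infty _ _ f g l1 l2). Qed.

Lemma is_RInt_gen_minus_R (f g : R -> R) (l1 l2 : R) :
  is_RInt_gen f at_0_plus at_infty l1 -> is_RInt_gen g at_0_plus at_infty l2 ->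
  is_RInt_gen (fun t => f t - g t) at_0_plus at_infty (l1 - l2).
Proof. exact (@is_RInt_gen_minus R_NormedModule at_0_plus at_infty _ _ f g l1 l2). Qed.

Lemma RInt_gen_correct_R (f : R -> R) : ex_RInt_gen f at_0_plus at_infty ->
  is_RInt_gen f at_0_plus at_infty (RInt_gen f at_0_plus at_infty).
Proof. exact (@RInt_gen_correct R_CompleteNormedModule at_0_plus at_infty _ _ f). Qed.

Lemma is_RInt_gen_unique_R (f : R -> R) (l : R) : is_RInt_gen f at_0_plus at_infty l ->
  RInt_gen f at_0_plus at_infty = l.
Proof. exact (@is_RInt_gen_unique R_CompleteNormedModule at_0_plus at_infty _ _ f l). Qed.

Lemma abs_is_RInt_gen_le (f g : R -> R) (lf lg : R) : (forall t, 0 < t -> Rabs (f t) <= g t) ->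
  is_RInt_gen f at_0_plus at_infty lf -> is_RInt_gen g at_0_plus at_infty lg -> Rabs lf <= lg.
Proof.
  intros Hfg Hf Hg.
  apply (@RInt_gen_norm R_CompleteNormedModule at_0_plus at_infty _ _ f g lf lg); auto.
  - eapply filter_imp; [|apply at_0_plus_at_infty_bounds]. intros [a b] H; simpl in *; lra.
  - eapply filter_imp; [|apply at_0_plus_at_infty_bounds]. intros [a b] H x Hx; simpl in *.
    apply Hfg. lra.
Qed.

Lemma ex_RInt_pos (g : R -> R) (u v : R) : (forall t, 0 < t -> continuous g t) ->
  0 < u -> 0 < v -> ex_RInt g u v.
Proof.
  intros Hg Hu Hv. apply (@ex_RInt_continuous R_CompleteNormedModule). intros z Hz.
  apply Hg. pose proof (Rmin_glb_lt u v 0 Hu Hv). lra.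
Qed.

Lemma RInt_sub_RInt (g : R -> R) (a b a' b' : R) : (forall t, 0 < t -> continuous g t) ->
  0 < a -> 0 < b -> 0 < a' -> 0 < b' ->
  RInt g a b - RInt g a' b' = RInt g a a' + RInt g b' b.
Proof.
  intros Hg Ha Hb Ha' Hb'.
  rewrite <- (@RInt_Chasles R_CompleteNormedModule g a a' b) by (apply ex_RInt_pos; auto).
  rewrite <- (@RInt_Chasles R_CompleteNormedModule g a' b' b) by (apply ex_RInt_pos; auto).
  unfold plus; simpl. ring.
Qed.

Section Dominated.

Variables f D : R -> R.
Hypothesis f_cont : forall t, 0 < t -> continuous f t.
Hypothesis D_cont : forall t, 0 < t -> continuous D t.
Hypothesis f_le_D : forall t, 0 < t -> Rabs (f t) <= D t.

Lemma abs_RInt_le_abs_RInt_dominant (u v : R) : 0 < u -> 0 < v ->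
  Rabs (RInt f u v) <= Rabs (RInt D u v).
Proof.
  assert (Hle : forall u v, 0 < u -> 0 < v -> u <= v -> Rabs (RInt f u v) <= Rabs (RInt D u v)).
  { clear u v. intros u v Hu Hv Huv.
    eapply Rle_trans; [apply abs_RInt_le; auto; apply ex_RInt_pos; auto|].
    eapply Rle_trans; [|apply Rle_abs].
    apply RInt_le; auto; try apply ex_RInt_pos; auto.
    - intros t Ht. apply continuous_Rabs_comp, f_cont; auto.
    - intros t Ht. apply f_le_D. lra. }
  intros Hu Hv. destruct (Rle_dec u v); [auto|].
  rewrite <- (opp_RInt_swap f), <- (opp_RInt_swap D) by (apply ex_RInt_pos; auto).
  unfold opp; simpl. rewrite !Rabs_Ropp. apply Hle; auto; lra.
Qed.

Variable LD : R.
Hypothesis D_int : is_RInt_gen D at_0_plus at_infty LD.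

Let I (ab : R * R) : R := RInt f (fst ab) (snd ab).

(* Integrals of [f] over two large intervals differ by integrals over the two
   gaps, which are bounded by the same gaps for [D], hence small. *)
Lemma RInt_dominated_cauchy : cauchy (filtermap I (filter_prod at_0_plus at_infty)).
Proof.
  intros eps.
  assert (Heps : 0 < eps / 4) by (destruct eps; simpl; lra).
  assert (HJ : filter_prod at_0_plus at_infty (fun ab =>
            Rabs (RInt D (fst ab) (snd ab) - LD) < eps / 4 /\ 0 < fst ab < 1 /\ 1 < snd ab)).
  { pose proof (D_int _ (locally_ball LD (mkposreal _ Heps))) as HD.
    unfold filtermapi in HD. apply filter_and with (1 := at_0_plus_at_infty_bounds) in HD.
    eapply filter_imp; [|exact HD].
    intros [a b] [Hab [y [Hy HLy]]]. simpl in *. split; [|exact Hab].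
    rewrite (@is_RInt_unique R_CompleteNormedModule _ _ _ _ Hy). apply ball_R, HLy. }
  destruct HJ as [P Q HP HQ HPQ].
  destruct (filter_ex P HP) as [a0 Ha0]. destruct (filter_ex Q HQ) as [b0 Hb0].
  exists (I (a0, b0)). apply Filter_prod with P Q; auto. intros a b Ha Hb.
  apply ball_R. unfold I; simpl.
  destruct (HPQ a b Ha Hb) as [H1 [Ha1 Hb1]].
  destruct (HPQ a0 b Ha0 Hb) as [H2 [Ha2 _]].
  destruct (HPQ a0 b0 Ha0 Hb0) as [H3 [_ Hb3]]. simpl in *.
  rewrite RInt_sub_RInt by (auto; lra).
  pose proof (abs_RInt_le_abs_RInt_dominant a a0 ltac:(lra) ltac:(lra)).
  pose proof (abs_RInt_le_abs_RInt_dominant b0 b ltac:(lra) ltac:(lra)).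
  assert (Hpoint : forall x, RInt D x x = 0) by (intros; apply (@RInt_point R_CompleteNormedModule)).
  assert (Rabs (RInt D a a0) < eps / 2).
  { rewrite <- (Rplus_0_r (RInt D a a0)), <- (Hpoint b), <- RInt_sub_RInt by (auto; lra).
    apply Rabs_def2 in H1. apply Rabs_def2 in H2. apply Rabs_def1; lra. }
  assert (Rabs (RInt D b0 b) < eps / 2).
  { rewrite <- (Rplus_0_l (RInt D b0 b)), <- (Hpoint a0), <- RInt_sub_RInt by (auto; lra).
    apply Rabs_def2 in H2. apply Rabs_def2 in H3. apply Rabs_def1; lra. }
  eapply Rle_lt_trans; [apply Rabs_triang|]. lra.
Qed.

Lemma ex_RInt_gen_dominated : ex_RInt_gen f at_0_plus at_infty.
Proof.
  set (F := filter_prod at_0_plus at_infty).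
  assert (HF : ProperFilter (filtermap I F)).
  { apply filtermap_proper_filter, filter_prod_proper. }
  pose proof (complete_cauchy _ HF RInt_dominated_cauchy) as Hlim.
  exists (lim (filtermap I F)). intros P [eps HP]. unfold filtermapi.
  apply filter_imp with (fun ab => ball (lim (filtermap I F)) eps (I ab)
                                   /\ 0 < fst ab < 1 /\ 1 < snd ab).
  - intros [a b] [H1 H2]. exists (I (a, b)). split; auto.
    unfold I; simpl. apply (@RInt_correct R_CompleteNormedModule).
    simpl in H2. apply ex_RInt_pos; auto; lra.
  - apply filter_and; [apply Hlim | apply at_0_plus_at_infty_bounds].
Qed.

End Dominated.

Lemma is_RInt_gen_of_primitive (F f : R -> R) (l0 l1 : R) :
  (forall t, 0 < t -> is_derive F t (f t)) -> (forall t, 0 < t -> continuous f t) ->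
  filterlim F at_0_plus (locally l0) -> filterlim F at_infty (locally l1) ->
  is_RInt_gen f at_0_plus at_infty (l1 - l0).
Proof.
  intros HF Hf H0 H1.
  assert (Hpos : forall ab : R * R, 0 < fst ab < 1 /\ 1 < snd ab ->
            forall x, Rmin (fst ab) (snd ab) <= x <= Rmax (fst ab) (snd ab) -> 0 < x).
  { intros [a b] Hab x Hx. simpl in *. pose proof (Rmin_glb_lt a b 0). lra. }
  apply is_RInt_gen_ext with (Derive F).
  - eapply filter_imp; [|apply at_0_plus_at_infty_bounds]. intros ab Hab x Hx.
    apply is_derive_unique, HF, (Hpos ab Hab). lra.
  - apply is_RInt_gen_Derive; auto;
      eapply filter_imp; try apply at_0_plus_at_infty_bounds; intros ab Hab x Hx;
      specialize (Hpos ab Hab x Hx).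
    + eexists. apply HF; auto.
    + apply continuous_ext_loc with f; [|apply Hf; auto].
      apply locally_interval with 0 p_infty; simpl; auto.
      intros y Hy _. symmetry. apply is_derive_unique, HF; auto.
Qed.

(** * The Euler integral *)

(* [t^(b-1) / (1 + t^b)^2] has the elementary primitive below and total
   integral [1/b]; for [b = a/2] it dominates [t^(a-1) |ln t|^m e^(-t)] both
   near 0 and near +oo. *)
Definition euler_dominant (b t : R) : R := exp ((b - 1) * ln t) / (1 + exp (b * ln t)) ^ 2.

Definition euler_dominant_primitive (b t : R) : R := - / (b * (1 + exp (b * ln t))).

Lemma is_derive_euler_dominant_primitive b t : 0 < b -> 0 < t ->
  is_derive (euler_dominant_primitive b) t (euler_dominant b t).
Proof.
  intros Hb Ht. unfold euler_dominant_primitive, euler_dominant.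
  pose proof (exp_pos (b * ln t)). auto_derive.
  - repeat split; auto. apply Rgt_not_eq. apply Rmult_lt_0_compat; lra.
  - rewrite exp_sub_1_mul_ln by auto. field. repeat split; lra.
Qed.

Lemma continuous_euler_dominant b t : 0 < b -> 0 < t -> continuous (euler_dominant b) t.
Proof.
  intros Hb Ht. apply (@ex_derive_continuous R_AbsRing R_NormedModule).
  unfold euler_dominant. pose proof (exp_pos (b * ln t)).
  auto_derive. repeat split; auto. apply Rgt_not_eq; nra.
Qed.

Lemma euler_dominant_primitive_at_0 b : 0 < b ->
  filterlim (euler_dominant_primitive b) at_0_plus (locally (- / b)).
Proof.
  intros Hb. apply filterlim_locally. intros eps.
  assert (Hbe : 0 < b * eps) by (destruct eps; simpl; nra).
  apply at_0_plus_of_interval with (exp (ln (b * eps) / b)); [apply exp_pos|].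
  intros t Ht. apply ball_R. unfold euler_dominant_primitive.
  pose proof (exp_mul_ln_lt b (b * eps) t Hb Hbe (proj1 Ht) (proj2 Ht)).
  set (p := exp (b * ln t)) in *. assert (0 < p) by apply exp_pos.
  replace (- / (b * (1 + p)) - - / b) with (p / b * / (1 + p)) by (field; lra).
  rewrite Rabs_right by (apply Rle_ge, Rmult_le_pos; [apply Rlt_le, Rdiv_lt_0_compat|
                                                     apply Rlt_le, Rinv_0_lt_compat]; lra).
  apply Rle_lt_trans with (p / b).
  - rewrite <- (Rmult_1_r (p / b)) at 2. apply Rmult_le_compat_l.
    + apply Rlt_le, Rdiv_lt_0_compat; lra.
    + rewrite <- Rinv_1. apply Rinv_le_contravar; lra.
  - apply Rmult_lt_reg_r with b; auto. unfold Rdiv. rewrite Rmult_assoc, Rinv_l; lra.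
Qed.

Lemma euler_dominant_primitive_at_infty b : 0 < b ->
  filterlim (euler_dominant_primitive b) at_infty (locally 0).
Proof.
  intros Hb. apply filterlim_locally. intros [e He].
  assert (Hbe : 0 < / (b * e)) by (apply Rinv_0_lt_compat; nra).
  exists (exp (ln (/ (b * e)) / b)). intros t Ht. apply ball_R.
  unfold euler_dominant_primitive. simpl.
  pose proof (exp_mul_ln_gt b _ t Hb Hbe Ht) as Hp.
  set (p := exp (b * ln t)) in *. assert (0 < p) by apply exp_pos.
  rewrite Rminus_0_r, Rabs_Ropp, Rabs_right by (apply Rle_ge, Rlt_le, Rinv_0_lt_compat; nra).
  apply Rle_lt_trans with (/ (b * p)); [apply Rinv_le_contravar; nra|].
  assert (1 < b * e * p).
  { apply Rmult_lt_compat_l with (r := b * e) in Hp; [|nra].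
    replace (b * e * / (b * e)) with 1 in Hp by (field; lra). exact Hp. }
  apply Rmult_lt_reg_l with (b * p); [nra|]. rewrite Rinv_r by nra. nra.
Qed.

Lemma is_RInt_gen_euler_dominant b : 0 < b ->
  is_RInt_gen (euler_dominant b) at_0_plus at_infty (/ b).
Proof.
  intros Hb. replace (/ b) with (0 - - / b) by ring.
  apply is_RInt_gen_of_primitive with (euler_dominant_primitive b).
  - intros t Ht. apply is_derive_euler_dominant_primitive; auto.
  - intros t Ht. apply continuous_euler_dominant; auto.
  - apply euler_dominant_primitive_at_0; auto.
  - apply euler_dominant_primitive_at_infty; auto.
Qed.

Lemma euler_dominant_ge_nonpos_ln b t : 0 < b -> ln t <= 0 ->
  exp ((b - 1) * ln t) / 4 <= euler_dominant b t.
Proof.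
  intros Hb HL. unfold euler_dominant.
  assert (exp (b * ln t) <= 1) by (rewrite <- exp_0; apply exp_le_mono; nra).
  pose proof (exp_pos (b * ln t)). pose proof (exp_pos ((b - 1) * ln t)).
  apply Rmult_le_compat_l; [lra|]. apply Rinv_le_contravar; [apply pow_lt|]; nra.
Qed.

Lemma euler_dominant_ge_nonneg_ln b t : 0 < b -> 0 <= ln t ->
  exp (- (b + 1) * ln t) / 4 <= euler_dominant b t.
Proof.
  intros Hb HL. unfold euler_dominant.
  set (p := exp (b * ln t)).
  assert (1 <= p) by (unfold p; rewrite <- exp_0; apply exp_le_mono; nra).
  assert (E : exp ((b - 1) * ln t) = exp (- (b + 1) * ln t) * p ^ 2).
  { unfold p. rewrite <- exp_INR_mul, <- exp_plus. f_equal. simpl. ring. }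
  rewrite E. pose proof (exp_pos (- (b + 1) * ln t)).
  unfold Rdiv. rewrite Rmult_assoc. apply Rmult_le_compat_l; [lra|].
  apply Rmult_le_reg_r with (4 * (1 + p) ^ 2); [apply Rmult_lt_0_compat; [|apply pow_lt]; lra|].
  field_simplify; [nra | nra].
Qed.

Lemma euler_integrand_dominated a m : 0 < a -> exists C, forall t, 0 < t ->
  exp ((a - 1) * ln t) * Rabs (ln t) ^ m * exp (- t) <= C * euler_dominant (a / 2) t.
Proof.
  intros Ha. set (b := a / 2). assert (Hb : 0 < b) by (unfold b; lra).
  destruct (exp_mul_pow_exp_exp_bounded (3 * b) m) as [K [HK0 HK]].
  set (K1 := INR (fact m) / b ^ m).
  assert (HK1 : 0 <= K1).
  { apply Rmult_le_pos; [apply pos_INR|apply Rlt_le, Rinv_0_lt_compat, pow_lt; auto]. }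
  exists (4 * (K1 + K)). intros t Ht. set (L := ln t).
  assert (Et : t = exp L) by (unfold L; rewrite exp_ln; auto).
  pose proof (pow_le (Rabs L) m (Rabs_pos L)).
  destruct (Rle_dec L 0) as [HL|HL].
  - assert (E : exp ((a - 1) * L) = exp ((b - 1) * L) * exp (b * L)).
    { rewrite <- exp_plus. f_equal. unfold b. field. }
    pose proof (exp_mul_pow_abs_le b m L Hb HL) as HK1L. fold K1 in HK1L.
    pose proof (euler_dominant_ge_nonpos_ln b t Hb HL) as Hdom. fold L in Hdom.
    assert (exp (- t) <= 1) by (rewrite <- exp_0; apply exp_le_mono; lra).
    pose proof (exp_pos ((b - 1) * L)). pose proof (exp_pos (b * L)). pose proof (exp_pos (- t)).
    rewrite E.
    apply Rle_trans with (exp ((b - 1) * L) * K1).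
    + rewrite !Rmult_assoc. apply Rmult_le_compat_l; [lra|].
      rewrite <- Rmult_assoc, <- (Rmult_1_r K1). apply Rmult_le_compat; nra.
    + nra.
  - assert (HL' : 0 <= L) by lra.
    assert (E : exp ((a - 1) * L) = exp (- (b + 1) * L) * exp (3 * b * L)).
    { rewrite <- exp_plus. f_equal. unfold b. field. }
    pose proof (HK L HL') as HKL. rewrite <- Et in HKL.
    pose proof (euler_dominant_ge_nonneg_ln b t Hb HL') as Hdom. fold L in Hdom.
    pose proof (exp_pos (- (b + 1) * L)).
    rewrite E, Rabs_right by lra.
    apply Rle_trans with (exp (- (b + 1) * L) * K).
    + rewrite !Rmult_assoc. apply Rmult_le_compat_l; [lra|].
      rewrite <- !Rmult_assoc. exact HKL.
    + nra.
Qed.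

Definition euler_integrand (n : nat) (x t : R) : R :=
  exp ((x - 1) * ln t) * ln t ^ n * exp (- t).

Definition euler_integral (n : nat) (x : R) : R :=
  RInt_gen (euler_integrand n x) at_0_plus at_infty.

Lemma continuous_euler_integrand n x t : 0 < t -> continuous (euler_integrand n x) t.
Proof.
  intros Ht. apply (@ex_derive_continuous R_AbsRing R_NormedModule).
  unfold euler_integrand. auto_derive. repeat split; auto.
Qed.

Lemma abs_euler_integrand n x t :
  Rabs (euler_integrand n x t) = exp ((x - 1) * ln t) * Rabs (ln t) ^ n * exp (- t).
Proof.
  unfold euler_integrand. rewrite !Rabs_mult, <- RPow_abs.
  rewrite !(Rabs_right (exp _)) by (apply Rle_ge, Rlt_le, exp_pos). reflexivity.
Qed.

Lemma ex_euler_integral n x : 0 < x -> ex_RInt_gen (euler_integrand n x) at_0_plus at_infty.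
Proof.
  intros Hx. destruct (euler_integrand_dominated x n Hx) as [C HC].
  apply ex_RInt_gen_dominated with (fun t => C * euler_dominant (x / 2) t) (C * / (x / 2)).
  - apply continuous_euler_integrand.
  - intros t Ht. apply (@continuous_mult R_UniformSpace R_AbsRing (fun _ => C)).
    + apply continuous_const.
    + apply continuous_euler_dominant; lra.
  - intros t Ht. rewrite abs_euler_integrand. apply HC; auto.
  - apply is_RInt_gen_scal_R, is_RInt_gen_euler_dominant. lra.
Qed.

Lemma is_derive_of_quadratic_remainder (F : R -> R) x l d K : 0 < d ->
  (forall h, Rabs h < d -> Rabs (F (x + h) - F x - h * l) <= K * h ^ 2) ->
  is_derive F x l.
Proof.
  intros Hd HF. apply is_derive_Reals. intros eps Heps.
  assert (HK : 0 <= K).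
  { specialize (HF (d / 2)). rewrite Rabs_right in HF by lra.
    pose proof (Rabs_pos (F (x + d / 2) - F x - d / 2 * l)).
    assert (0 < (d / 2) ^ 2) by (apply pow_lt; lra).
    assert (Rabs (F (x + d / 2) - F x - d / 2 * l) <= K * (d / 2) ^ 2) by (apply HF; lra).
    nra. }
  assert (Hd' : 0 < Rmin d (eps / (K + 1))).
  { apply Rmin_glb_lt; [lra | apply Rdiv_lt_0_compat; lra]. }
  exists (mkposreal _ Hd'). simpl. intros h Hh0 Hh.
  pose proof (Rlt_le_trans _ _ _ Hh (Rmin_l _ _)) as Hhd.
  pose proof (Rlt_le_trans _ _ _ Hh (Rmin_r _ _)) as Hheps.
  pose proof (Rabs_pos_lt h Hh0) as Habs.
  replace ((F (x + h) - F x) / h - l) with ((F (x + h) - F x - h * l) / h) by (field; auto).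
  unfold Rdiv. rewrite Rabs_mult, Rabs_inv.
  apply Rle_lt_trans with (K * Rabs h).
  - apply Rmult_le_reg_r with (Rabs h); [lra|].
    rewrite Rmult_assoc, Rinv_l, Rmult_1_r by lra.
    replace (K * Rabs h * Rabs h) with (K * h ^ 2) by (rewrite <- (pow2_abs h); ring).
    apply HF; auto.
  - apply Rle_lt_trans with ((K + 1) * Rabs h); [nra|].
    apply Rmult_lt_reg_l with (/ (K + 1)); [apply Rinv_0_lt_compat; lra|].
    rewrite <- Rmult_assoc, Rinv_l, Rmult_1_l by lra.
    unfold Rdiv in Hheps. lra.
Qed.

(* From [e^(hL) - 1 - hL <= (hL)^2 e^|hL|] with [L = ln t], and
   [e^|hL| <= t^(x/2) + t^(-x/2)] for [|h| <= x/2]. *)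
Lemma euler_integrand_remainder n x h t : 0 < t -> Rabs h <= x / 2 ->
  Rabs (euler_integrand n (x + h) t - euler_integrand n x t - h * euler_integrand (S n) x t) <=
  h ^ 2 * (exp ((x / 2 - 1) * ln t) * Rabs (ln t) ^ (n + 2) * exp (- t)
         + exp ((3 * x / 2 - 1) * ln t) * Rabs (ln t) ^ (n + 2) * exp (- t)).
Proof.
  intros Ht Hh. unfold euler_integrand. set (L := ln t).
  set (P := exp ((x - 1) * L) * Rabs L ^ n * exp (- t)).
  assert (E : exp ((x + h - 1) * L) * L ^ n * exp (- t) - exp ((x - 1) * L) * L ^ n * exp (- t)
              - h * (exp ((x - 1) * L) * L ^ S n * exp (- t))
            = exp ((x - 1) * L) * L ^ n * exp (- t) * (exp (h * L) - 1 - h * L)).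
  { replace ((x + h - 1) * L) with ((x - 1) * L + h * L) by ring. rewrite exp_plus. simpl. ring. }
  assert (Habs : Rabs (exp ((x - 1) * L) * L ^ n * exp (- t)) = P)
    by exact (abs_euler_integrand n x t).
  assert (HP : 0 <= P) by (rewrite <- Habs; apply Rabs_pos).
  destruct (exp_sub_1_sub_bound (h * L)) as [B1 B2].
  rewrite E, Rabs_mult, Habs, (Rabs_right (exp _ - _ - _)) by lra.
  pose proof (exp_abs_mul_le h (x / 2) L Hh) as Hab.
  replace (h ^ 2 * (exp ((x / 2 - 1) * L) * Rabs L ^ (n + 2) * exp (- t) +
                    exp ((3 * x / 2 - 1) * L) * Rabs L ^ (n + 2) * exp (- t)))
    with (P * ((h * L) ^ 2 * (exp (x / 2 * L) + exp (- (x / 2 * L))))).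
  - apply Rmult_le_compat_l; auto. eapply Rle_trans; [exact B2|].
    apply Rmult_le_compat_l; [apply pow2_ge_0 | exact Hab].
  - unfold P. rewrite pow_add, pow2_abs.
    replace ((x / 2 - 1) * L) with ((x - 1) * L + - (x / 2 * L)) by field.
    replace ((3 * x / 2 - 1) * L) with ((x - 1) * L + x / 2 * L) by field.
    rewrite !exp_plus. ring.
Qed.

Lemma is_derive_euler_integral n x : 0 < x ->
  is_derive (euler_integral n) x (euler_integral (S n) x).
Proof.
  intros Hx.
  destruct (euler_integrand_dominated (x / 2) (n + 2) ltac:(lra)) as [C1 HC1].
  destruct (euler_integrand_dominated (3 * x / 2) (n + 2) ltac:(lra)) as [C2 HC2].
  set (K := C1 * / (x / 2 / 2) + C2 * / (3 * x / 2 / 2)).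
  apply is_derive_of_quadratic_remainder with (x / 2) K; [lra|].
  intros h Hh.
  assert (Hxh : 0 < x + h) by (apply Rabs_def2 in Hh; lra).
  assert (Hr : is_RInt_gen
            (fun t => euler_integrand n (x + h) t - euler_integrand n x t - h * euler_integrand (S n) x t)
            at_0_plus at_infty (euler_integral n (x + h) - euler_integral n x - h * euler_integral (S n) x)).
  { apply is_RInt_gen_minus_R; [apply is_RInt_gen_minus_R|apply is_RInt_gen_scal_R];
      apply RInt_gen_correct_R, ex_euler_integral; auto. }
  assert (Hdom : is_RInt_gen
            (fun t => h ^ 2 * (C1 * euler_dominant (x / 2 / 2) t + C2 * euler_dominant (3 * x / 2 / 2) t))
            at_0_plus at_infty (h ^ 2 * K)).
  { apply is_RInt_gen_scal_R, is_RInt_gen_plus_R;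
      apply is_RInt_gen_scal_R, is_RInt_gen_euler_dominant; lra. }
  rewrite (Rmult_comm K). eapply abs_is_RInt_gen_le; [|exact Hr|exact Hdom].
  intros t Ht. eapply Rle_trans; [apply euler_integrand_remainder; auto; lra|].
  apply Rmult_le_compat_l; [apply pow2_ge_0|].
  apply Rplus_le_compat; [apply HC1 | apply HC2]; auto.
Qed.

Lemma Gamma_pos_euler_integral x : 0 < x -> Gamma_pos x = euler_integral 0 x.
Proof.
  intros Hx. unfold Gamma_pos, euler_integral. symmetry.
  apply (@RInt_gen_ext_eq R_CompleteNormedModule at_0_plus at_infty _ _).
  - intros t. unfold euler_integrand, Rpower. simpl. ring.
  - apply ex_euler_integral; auto.
Qed.

Lemma Derive_n_Gamma_pos n x : 0 < x -> Derive_n Gamma_pos n x = euler_integral n x.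
Proof.
  revert x. induction n as [|n IH]; intros x Hx; [apply Gamma_pos_euler_integral; auto|].
  simpl. rewrite (Derive_ext_loc _ (euler_integral n)).
  - apply is_derive_unique, is_derive_euler_integral; auto.
  - apply locally_interval with 0 p_infty; simpl; auto.
Qed.

Lemma ex_derive_Derive_n_Gamma_pos n x : 0 < x -> ex_derive (Derive_n Gamma_pos n) x.
Proof.
  intros Hx. apply ex_derive_ext_loc with (euler_integral n).
  - apply locally_interval with 0 p_infty; simpl; auto. intros y Hy _.
    symmetry. apply Derive_n_Gamma_pos; auto.
  - eexists. apply is_derive_euler_integral; auto.
Qed.

Lemma rpow_mul_exp_neg_at_0 x : 0 < x ->
  filterlim (fun t => exp (x * ln t) * exp (- t)) at_0_plus (locally 0).
Proof.
  intros Hx. apply filterlim_locally. intros [e He]. simpl.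
  apply at_0_plus_of_interval with (exp (ln e / x)); [apply exp_pos|].
  intros t [Ht0 Ht]. apply ball_R.
  pose proof (exp_mul_ln_lt x e t Hx He Ht0 Ht).
  assert (exp (- t) <= 1) by (rewrite <- exp_0; apply exp_le_mono; lra).
  pose proof (exp_pos (x * ln t)). pose proof (exp_pos (- t)).
  rewrite Rminus_0_r, Rabs_right by (apply Rle_ge; nra). nra.
Qed.

Lemma rpow_mul_exp_neg_at_infty x :
  filterlim (fun t => exp (x * ln t) * exp (- t)) at_infty (locally 0).
Proof.
  apply filterlim_locally. intros [e He]. simpl.
  destruct (exp_mul_pow_exp_exp_bounded (x + 1) 0) as [K [HK0 HK]].
  exists (Rmax 1 (K / e)). intros t Ht. apply ball_R.
  pose proof (Rle_lt_trans _ _ _ (Rmax_l _ _) Ht) as Ht1.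
  pose proof (Rle_lt_trans _ _ _ (Rmax_r _ _) Ht) as HtK.
  assert (HL : 0 <= ln t) by (rewrite <- ln_1; apply ln_le; lra).
  specialize (HK (ln t) HL). rewrite exp_ln, pow_O, Rmult_1_r in HK by lra.
  replace ((x + 1) * ln t) with (x * ln t + ln t) in HK by ring.
  rewrite exp_plus, exp_ln in HK by lra.
  pose proof (exp_pos (x * ln t)). pose proof (exp_pos (- t)).
  rewrite Rminus_0_r, Rabs_right by (apply Rle_ge; nra).
  assert (K < e * t).
  { apply Rmult_lt_reg_r with (/ e); [apply Rinv_0_lt_compat; lra|].
    replace (e * t * / e) with t by (field; lra). exact HtK. }
  nra.
Qed.

Lemma Gamma_pos_succ x : 0 < x -> Gamma_pos (x + 1) = x * Gamma_pos x.
Proof.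
  intros Hx. rewrite !Gamma_pos_euler_integral by lra.
  assert (Hparts : is_RInt_gen (fun t => x * euler_integrand 0 x t - euler_integrand 0 (x + 1) t)
                     at_0_plus at_infty (0 - 0)).
  { apply is_RInt_gen_of_primitive with (fun t => exp (x * ln t) * exp (- t)).
    - intros t Ht. unfold euler_integrand. auto_derive; auto.
      rewrite exp_sub_1_mul_ln by auto. replace (x + 1 - 1) with x by ring. field. lra.
    - intros t Ht. apply (@ex_derive_continuous R_AbsRing R_NormedModule).
      unfold euler_integrand. auto_derive. repeat split; lra.
    - apply rpow_mul_exp_neg_at_0; auto.
    - apply rpow_mul_exp_neg_at_infty. }
  assert (Hint : is_RInt_gen (fun t => x * euler_integrand 0 x t - euler_integrand 0 (x + 1) t)
                   at_0_plus at_infty (x * euler_integral 0 x - euler_integral 0 (x + 1))).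
  { apply is_RInt_gen_minus_R; [apply is_RInt_gen_scal_R|];
      apply RInt_gen_correct_R, ex_euler_integral; lra. }
  apply is_RInt_gen_unique_R in Hparts. apply is_RInt_gen_unique_R in Hint. lra.
Qed.

Lemma Gamma_eq_Gamma_pos x : 0 < x -> Gamma x = Gamma_pos x.
Proof.
  intros Hx. unfold Gamma.
  assert (up (- x) <= 0)%Z.
  { destruct (archimed (- x)) as [H1 H2].
    apply Z.lt_succ_r, lt_IZR. rewrite succ_IZR. lra. }
  replace (Z.to_nat (up (- x))) with O by lia.
  unfold rising. simpl. rewrite Rplus_0_r. field.
Qed.

(** * Taylor coefficients of products *)

Definition taylor_coef (f : R -> R) (l : nat) (x : R) : R := Derive_n f l x / INR (fact l).

Lemma taylor_coef_ext f g l x : (forall y, f y = g y) -> taylor_coef f l x = taylor_coef g l x.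
Proof. intros E. unfold taylor_coef. rewrite (Derive_n_ext f g); auto. Qed.

Lemma is_derive_sum_f_R0 (F : nat -> R -> R) (F' : nat -> R) x m :
  (forall l, (l <= m)%nat -> is_derive (F l) x (F' l)) ->
  is_derive (fun y => sum_f_R0 (fun l => F l y) m) x (sum_f_R0 F' m).
Proof.
  induction m as [|m IH]; intros H; simpl; [apply H; auto|].
  apply (@is_derive_plus R_AbsRing R_NormedModule); [apply IH; intros; apply H|apply H]; lia.
Qed.

Lemma is_derive_mult_R (f g : R -> R) x df dg : is_derive f x df -> is_derive g x dg ->
  is_derive (fun y => f y * g y) x (df * g x + f x * dg).
Proof. intros Hf Hg. exact (@is_derive_mult R_AbsRing f g x df dg Hf Hg Rmult_comm). Qed.

(* Pascal's rule, in the form of the induction step of the Leibniz formula. *)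
Lemma sum_f_R0_leibniz_step (A B : nat -> R) n :
  sum_f_R0 (fun l => INR (S l) * A (S l) * B (n - l)%nat + A l * (INR (S (n - l)) * B (S (n - l)))) n
  = INR (S n) * sum_f_R0 (fun l => A l * B (S n - l)%nat) (S n).
Proof.
  set (T := fun l => A l * B (S n - l)%nat).
  rewrite plus_sum.
  assert (E1 : sum_f_R0 (fun l => INR (S l) * A (S l) * B (n - l)%nat) n
               = sum_f_R0 (fun l => INR l * T l) (S n)).
  { rewrite (decomp_sum (fun l => INR l * T l) (S n)) by lia. simpl pred.
    rewrite Rmult_0_l, Rplus_0_l. apply sum_eq. intros i Hi. unfold T.
    replace (S n - S i)%nat with (n - i)%nat by lia. ring. }
  assert (E2 : sum_f_R0 (fun l => A l * (INR (S (n - l)) * B (S (n - l)))) n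
               = sum_f_R0 (fun l => (INR (S n) - INR l) * T l) (S n)).
  { rewrite tech5, Rminus_diag, Rmult_0_l, Rplus_0_r.
    apply sum_eq. intros i Hi. unfold T.
    replace (S n - i)%nat with (S (n - i)) by lia.
    rewrite (S_INR (n - i)), minus_INR, (S_INR n) by auto. ring. }
  rewrite E1, E2, <- plus_sum, scal_sum. apply sum_eq. intros i Hi. ring.
Qed.

Section SmoothOn.

Variables a b : R.

Definition smooth_on (f : R -> R) : Prop :=
  forall n x, a < x < b -> ex_derive (Derive_n f n) x.

Lemma smooth_on_ext f g : (forall x, f x = g x) -> smooth_on f -> smooth_on g.
Proof.
  intros E Hf n x Hx. apply ex_derive_ext with (Derive_n f n); [|apply Hf; auto].
  intros; apply Derive_n_ext; auto.
Qed.

Lemma smooth_on_const c : smooth_on (fun _ => c).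
Proof.
  intros [|n] x Hx; [apply ex_derive_const|].
  apply ex_derive_ext with (fun _ => 0); [intros t; symmetry; apply Derive_n_const|].
  apply ex_derive_const.
Qed.

Lemma is_derive_taylor_coef f l x : smooth_on f -> a < x < b ->
  is_derive (taylor_coef f l) x (INR (S l) * taylor_coef f (S l) x).
Proof.
  intros Hf Hx. unfold taylor_coef.
  replace (INR (S l) * (Derive_n f (S l) x / INR (fact (S l))))
    with (/ INR (fact l) * Derive_n f (S l) x).
  - apply is_derive_ext with (fun y => / INR (fact l) * Derive_n f l y).
    { intros t. apply Rmult_comm. }
    apply is_derive_scal; apply Derive_correct, Hf; auto.
  - rewrite fact_simpl, mult_INR. pose proof (INR_fact_lt_0 l).
    pose proof (lt_0_INR (S l) (Nat.lt_0_succ l)). field. lra.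
Qed.

Lemma Derive_n_mult f g : smooth_on f -> smooth_on g -> forall n x, a < x < b ->
  Derive_n (fun y => f y * g y) n x
  = INR (fact n) * sum_f_R0 (fun l => taylor_coef f l x * taylor_coef g (n - l) x) n.
Proof.
  intros Hf Hg n. induction n as [|n IH]; intros x Hx.
  - unfold taylor_coef. simpl. field.
  - simpl Derive_n at 1.
    rewrite (Derive_ext_loc _ (fun y => INR (fact n) *
               sum_f_R0 (fun l => taylor_coef f l y * taylor_coef g (n - l) y) n)).
    2:{ apply locally_interval with a b; simpl; try lra. intros; apply IH; lra. }
    apply is_derive_unique.
    replace (INR (fact (S n)) * sum_f_R0 (fun l => taylor_coef f l x * taylor_coef g (S n - l) x) (S n))
      with (INR (fact n) * sum_f_R0 (fun l => INR (S l) * taylor_coef f (S l) x * taylor_coef g (n - l) x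
             + taylor_coef f l x * (INR (S (n - l)) * taylor_coef g (S (n - l)) x)) n).
    + apply is_derive_scal; apply is_derive_sum_f_R0. intros l Hl.
      apply is_derive_mult_R; apply is_derive_taylor_coef; auto.
    + rewrite (sum_f_R0_leibniz_step (fun l => taylor_coef f l x) (fun l => taylor_coef g l x)).
      rewrite fact_simpl, mult_INR. ring.
Qed.

Lemma smooth_on_mult f g : smooth_on f -> smooth_on g -> smooth_on (fun y => f y * g y).
Proof.
  intros Hf Hg n x Hx.
  apply ex_derive_ext_loc with (fun y => INR (fact n) *
    sum_f_R0 (fun l => taylor_coef f l y * taylor_coef g (n - l) y) n).
  - apply locally_interval with a b; simpl; try lra.
    intros; symmetry; apply Derive_n_mult; auto; lra.
  - eexists. apply is_derive_scal; apply is_derive_sum_f_R0.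
    intros l Hl. apply is_derive_mult_R; apply is_derive_taylor_coef; auto.
Qed.

Lemma taylor_coef_mult f g n x : smooth_on f -> smooth_on g -> a < x < b ->
  taylor_coef (fun y => f y * g y) n x
  = sum_f_R0 (fun l => taylor_coef f l x * taylor_coef g (n - l) x) n.
Proof.
  intros Hf Hg Hx. unfold taylor_coef at 1. rewrite Derive_n_mult by auto.
  pose proof (INR_fact_lt_0 n). field. lra.
Qed.

End SmoothOn.

Lemma sumR_app l1 l2 : sumR (l1 ++ l2) = sumR l1 + sumR l2.
Proof. induction l1 as [|x l1 IH]; simpl; [ring|]. rewrite IH. ring. Qed.

Lemma prodR_app l1 l2 : prodR (l1 ++ l2) = prodR l1 * prodR l2.
Proof. induction l1 as [|x l1 IH]; simpl; [ring|]. rewrite IH. ring. Qed.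

Lemma sumR_map_flat_map {A B} (F : B -> R) (g : A -> list B) s :
  sumR (map F (flat_map g s)) = sumR (map (fun a => sumR (map F (g a))) s).
Proof. induction s as [|x s IH]; simpl; auto. rewrite map_app, sumR_app, IH. auto. Qed.

Lemma sumR_map_scal {A} (c : R) (F : A -> R) s :
  sumR (map (fun x => c * F x) s) = c * sumR (map F s).
Proof. induction s as [|x s IH]; simpl; [ring|]. rewrite IH. ring. Qed.

Lemma sumR_map_seq f j : sumR (map f (seq 0 (S j))) = sum_f_R0 f j.
Proof.
  induction j as [|j IH]; [simpl; ring|].
  rewrite seq_S, map_app, sumR_app, IH. simpl. ring.
Qed.

Lemma seq_0_S m : seq 0 (S m) = 0%nat :: map S (seq 0 m).
Proof. simpl. rewrite seq_shift. reflexivity. Qed.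

Definition prod_fun (m : nat) (fs : nat -> R -> R) (y : R) : R :=
  prodR (map (fun i => fs i y) (seq 0 m)).

(* The coefficient of [X^j] in the product of the series [sum_l c i l X^l], [i < m]. *)
Definition composition_sum (m : nat) (c : nat -> nat -> R) (j : nat) : R :=
  sumR (map (fun l => prodR (map (fun i => c i (nth i l O)) (seq 0 m))) (compositions m j)).

Lemma prod_fun_S m fs y : prod_fun (S m) fs y = fs O y * prod_fun m (fun i => fs (S i)) y.
Proof. unfold prod_fun. rewrite seq_0_S. simpl. rewrite map_map. reflexivity. Qed.

Lemma composition_sum_S m c j : composition_sum (S m) c j
  = sum_f_R0 (fun a => c O a * composition_sum m (fun i => c (S i)) (j - a)%nat) j.
Proof.
  unfold composition_sum.
  change (compositions (S m) j)
    with (flat_map (fun a => map (cons a) (compositions m (j - a))) (seq 0 (S j))).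
  rewrite sumR_map_flat_map, <- sumR_map_seq. f_equal. apply map_ext. intros a.
  rewrite map_map, <- sumR_map_scal. f_equal. apply map_ext. intros l.
  rewrite seq_0_S. simpl. rewrite map_map. reflexivity.
Qed.

Section ProdFun.

Variables a b : R.

Lemma smooth_on_prod_fun m fs : (forall i, (i < m)%nat -> smooth_on a b (fs i)) ->
  smooth_on a b (prod_fun m fs).
Proof.
  revert fs. induction m as [|m IH]; intros fs Hfs.
  - apply smooth_on_ext with (fun _ => 1); [reflexivity | apply smooth_on_const].
  - apply smooth_on_ext with (fun y => fs O y * prod_fun m (fun i => fs (S i)) y).
    { intros; symmetry; apply prod_fun_S. }
    apply smooth_on_mult; [apply Hfs; lia|]. apply IH. intros; apply Hfs; lia.
Qed.

Lemma taylor_coef_prod_fun m fs j x : (forall i, (i < m)%nat -> smooth_on a b (fs i)) ->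
  a < x < b ->
  taylor_coef (prod_fun m fs) j x = composition_sum m (fun i l => taylor_coef (fs i) l x) j.
Proof.
  revert fs j. induction m as [|m IH]; intros fs j Hfs Hx.
  - unfold taylor_coef, composition_sum. destruct j as [|j]; [simpl; unfold prod_fun; simpl; field|].
    rewrite (Derive_n_ext _ (fun _ => 1)) by reflexivity.
    rewrite Derive_n_const. simpl. unfold Rdiv. ring.
  - rewrite (taylor_coef_ext _ (fun y => fs O y * prod_fun m (fun i => fs (S i)) y))
      by (intros; apply prod_fun_S).
    rewrite taylor_coef_mult with (a := a) (b := b), composition_sum_S; auto.
    + apply sum_eq. intros i Hi. rewrite IH; auto. intros; apply Hfs; lia.
    + apply Hfs; lia.
    + apply smooth_on_prod_fun. intros; apply Hfs; lia.
Qed.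

End ProdFun.

Lemma Derive_n_reflect a b f c n y : smooth_on a b f -> a < c - y < b ->
  Derive_n (fun z => f (c - z)) n y = (-1) ^ n * Derive_n f n (c - y).
Proof.
  intros Hf Hy.
  rewrite (Derive_n_ext _ (fun z => (fun w => f (w + c)) (- z))) by (intros; f_equal; ring).
  rewrite (Derive_n_comp_opp (fun w => f (w + c))), Derive_n_comp_trans.
  { f_equal. f_equal. ring. }
  apply locally_interval with (a - c) (b - c); simpl; try lra.
  intros w Hw1 Hw2 [|m] Hm; [exact I|]. simpl.
  apply ex_derive_ext with (fun w => Derive_n f m (w + c)).
  { intros t. symmetry. apply Derive_n_comp_trans. }
  apply (@ex_derive_comp R_AbsRing R_NormedModule (Derive_n f m) (fun w => w + c)).
  - apply Hf. lra.
  - apply (@ex_derive_plus R_AbsRing R_NormedModule); [apply ex_derive_id|apply ex_derive_const].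
Qed.

Lemma Derive_n_inv_sub m n u : u < m ->
  Derive_n (fun v => / (m - v)) n u = INR (fact n) / (m - u) ^ (S n).
Proof.
  revert u. induction n as [|n IH]; intros u Hu; [simpl; field; lra|].
  simpl Derive_n at 1.
  rewrite (Derive_ext_loc _ (fun v => INR (fact n) / (m - v) ^ (S n))).
  2:{ apply locally_interval with m_infty m; simpl; auto. }
  apply is_derive_unique. auto_derive.
  - change ((m + - u) * (m + - u) ^ n) with ((m + - u) ^ (S n)). apply pow_nonzero. lra.
  - change (match n with 0%nat => 1 | S _ => INR n + 1 end) with (INR (S n)).
    rewrite fact_simpl, mult_INR. simpl pow. unfold Rminus.
    assert ((m + - u) ^ n <> 0) by (apply pow_nonzero; lra).
    field. split; auto; lra.
Qed.

Lemma smooth_on_inv_sub a b m : b <= m -> smooth_on a b (fun v => / (m - v)).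
Proof.
  intros Hm n x Hx. apply ex_derive_ext_loc with (fun v => INR (fact n) / (m - v) ^ (S n)).
  - apply locally_interval with m_infty m; simpl; try lra.
    intros; symmetry; apply Derive_n_inv_sub; auto.
  - auto_derive. change ((m + - x) * (m + - x) ^ n) with ((m + - x) ^ (S n)).
    apply pow_nonzero. lra.
Qed.

Lemma smooth_on_Gamma_pos_succ a b : -1 <= a -> smooth_on a b (fun u => Gamma_pos (u + 1)).
Proof.
  intros Ha n x Hx. apply ex_derive_ext with (fun u => Derive_n Gamma_pos n (u + 1)).
  { intros t. symmetry. apply Derive_n_comp_trans. }
  apply (@ex_derive_comp R_AbsRing R_NormedModule (Derive_n Gamma_pos n) (fun u => u + 1)).
  - apply ex_derive_Derive_n_Gamma_pos. lra.
  - apply (@ex_derive_plus R_AbsRing R_NormedModule); [apply ex_derive_id|apply ex_derive_const].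
Qed.

(** * The Gamma function near a pole *)

Lemma INR_sub_ge_1 k i : (i < k)%nat -> 1 <= INR (k - i).
Proof. intros Hi. replace 1 with (INR 1) by reflexivity. apply le_INR. lia. Qed.

Definition pole_factor (k i : nat) (u : R) : R :=
  if Nat.ltb i k then / (INR (k - i) - u) else Gamma_pos (u + 1).

Definition pole_regular_part (k : nat) (u : R) : R :=
  (-1) ^ (k + 1) * prod_fun (S k) (pole_factor k) u.

Lemma smooth_on_pole_factor k i : smooth_on (- / 2) (/ 2) (pole_factor k i).
Proof.
  unfold pole_factor. destruct (Nat.ltb_spec i k).
  - apply smooth_on_inv_sub. pose proof (INR_sub_ge_1 k i H). lra.
  - apply smooth_on_Gamma_pos_succ. lra.
Qed.

Lemma smooth_on_pole_regular_part k : smooth_on (- / 2) (/ 2) (pole_regular_part k).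
Proof.
  apply smooth_on_mult; [apply smooth_on_const|].
  apply smooth_on_prod_fun. intros; apply smooth_on_pole_factor.
Qed.

Lemma taylor_coef_pole_factor_lt k i l : (i < k)%nat ->
  taylor_coef (pole_factor k i) l 0 = / INR (k - i) ^ (S l).
Proof.
  intros Hi. unfold taylor_coef, pole_factor.
  rewrite (Derive_n_ext _ (fun v => / (INR (k - i) - v)))
    by (intros; destruct (Nat.ltb_spec i k); auto; lia).
  pose proof (INR_sub_ge_1 k i Hi).
  rewrite Derive_n_inv_sub, Rminus_0_r by lra.
  pose proof (INR_fact_lt_0 l). field. split; [apply pow_nonzero|]; lra.
Qed.

Lemma taylor_coef_pole_factor_last k l :
  taylor_coef (pole_factor k k) l 0 = Derive_n Gamma l 1 / INR (fact l).
Proof.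
  unfold taylor_coef, pole_factor.
  rewrite (Derive_n_ext _ (fun u => Gamma_pos (u + 1)))
    by (intros; destruct (Nat.ltb_spec k k); auto; lia).
  rewrite Derive_n_comp_trans, Rplus_0_l.
  rewrite (Derive_n_ext_loc Gamma Gamma_pos); auto.
  apply locally_interval with 0 p_infty; simpl; try lra; auto.
  intros; apply Gamma_eq_Gamma_pos; auto.
Qed.

Lemma composition_sum_pole_factor k j :
  composition_sum (S k) (fun i l => taylor_coef (pole_factor k i) l 0) j
  = sumR (map (lemma3_term k) (compositions (S k) j)).
Proof.
  unfold composition_sum. f_equal. apply map_ext. intros l.
  unfold lemma3_term. rewrite seq_S, map_app, prodR_app. simpl.
  rewrite taylor_coef_pole_factor_last, Rmult_1_r, Rmult_comm. f_equal.
  rewrite <- seq_shift, map_map. f_equal. apply map_ext_in. intros i Hi.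
  apply in_seq in Hi. rewrite taylor_coef_pole_factor_lt by lia.
  replace (k - S i + 1)%nat with (k - i)%nat by lia.
  replace (S i - 1)%nat with i by lia. reflexivity.
Qed.

Lemma Derive_n_pole_regular_part_0 k j : Derive_n (pole_regular_part k) j 0 =
  (-1) ^ (k + 1) * INR (fact j) * sumR (map (lemma3_term k) (compositions (S k) j)).
Proof.
  unfold pole_regular_part. rewrite Derive_n_scal_l.
  assert (H : taylor_coef (prod_fun (S k) (pole_factor k)) j 0
              = sumR (map (lemma3_term k) (compositions (S k) j))).
  { rewrite <- composition_sum_pole_factor.
    apply taylor_coef_prod_fun with (- / 2) (/ 2); [intros; apply smooth_on_pole_factor | lra]. }
  unfold taylor_coef in H. rewrite <- H.
  pose proof (INR_fact_lt_0 j). field. lra.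
Qed.

Lemma prodR_map_opp (g : nat -> R) s :
  prodR (map (fun i => - g i) s) = (-1) ^ (length s) * prodR (map g s).
Proof. induction s as [|x s IH]; simpl; [ring|]. rewrite IH. ring. Qed.

Lemma prodR_map_inv (g : nat -> R) s : prodR (map (fun i => / g i) s) = / prodR (map g s).
Proof. induction s as [|x s IH]; simpl; [rewrite Rinv_1; auto|]. rewrite IH, Rinv_mult. auto. Qed.

Lemma prodR_map_pos (g : nat -> R) s : (forall i, In i s -> 0 < g i) -> 0 < prodR (map g s).
Proof.
  induction s as [|x s IH]; simpl; intros H; [lra|].
  apply Rmult_lt_0_compat; [apply H | apply IH]; auto.
Qed.

Definition pole_denominator (k : nat) (u : R) : R :=
  prodR (map (fun i => INR (k - i) - u) (seq 0 k)).

Lemma pole_denominator_pos k u : u < 1 -> 0 < pole_denominator k u.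
Proof.
  intros Hu. apply prodR_map_pos. intros i Hi. apply in_seq in Hi.
  pose proof (INR_sub_ge_1 k i ltac:(lia)). lra.
Qed.

Lemma rising_prodR x n : rising x n = prodR (map (fun i => x + INR i) (seq 0 n)).
Proof. reflexivity. Qed.

Lemma rising_sub_INR k u : rising (u - INR k) k = (-1) ^ k * pole_denominator k u.
Proof.
  rewrite rising_prodR. unfold pole_denominator.
  rewrite <- (length_seq k 0) at 2. rewrite <- prodR_map_opp. f_equal. apply map_ext_in.
  intros i Hi. apply in_seq in Hi. rewrite minus_INR by lia. ring.
Qed.

Lemma prod_fun_pole_factor k u :
  prod_fun (S k) (pole_factor k) u = / pole_denominator k u * Gamma_pos (u + 1).
Proof.
  unfold prod_fun, pole_denominator. rewrite seq_S, map_app, prodR_app. simpl.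
  unfold pole_factor at 2. rewrite Nat.ltb_irrefl, Rmult_1_r. f_equal.
  rewrite <- prodR_map_inv. f_equal. apply map_ext_in. intros i Hi. apply in_seq in Hi.
  unfold pole_factor. destruct (Nat.ltb_spec i k); auto; lia.
Qed.

(* The shift [n] in the definition of [Gamma] is [k] for [u > 0] and [k + 1]
   for [u < 0]; both cases give the same formula. *)
Lemma Gamma_sub_INR k u : 0 < Rabs u < 1 ->
  Gamma (u - INR k) = Gamma_pos (u + 1) / (u * rising (u - INR k) k).
Proof.
  intros Hu. unfold Gamma. replace (- (u - INR k)) with (INR k - u) by ring.
  assert (Hu1 : -1 < u < 1) by (destruct Hu as [_ Hu1]; apply Rabs_def2 in Hu1; lra).
  assert (HR : rising (u - INR k) k <> 0).
  { rewrite rising_sub_INR. pose proof (pole_denominator_pos k u (proj2 Hu1)).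
    apply Rmult_integral_contrapositive. split; [apply pow_nonzero|]; lra. }
  assert (Hu0 : u <> 0) by (intros E; rewrite E, Rabs_R0 in Hu; lra).
  destruct (Rlt_dec 0 u) as [Hp|Hn].
  - replace (up (INR k - u)) with (Z.of_nat k)
      by (apply tech_up; rewrite <- INR_IZR_INZ; lra).
    rewrite Nat2Z.id. replace (u - INR k + INR k) with u by ring.
    rewrite Gamma_pos_succ by lra. field. auto.
  - replace (up (INR k - u)) with (Z.of_nat (S k))
      by (apply tech_up; rewrite <- INR_IZR_INZ, S_INR; lra).
    rewrite Nat2Z.id. replace (u - INR k + INR (S k)) with (u + 1) by (rewrite S_INR; ring).
    rewrite rising_prodR at 1. rewrite seq_S, map_app, prodR_app, <- rising_prodR. simpl.
    field. auto.
Qed.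

Lemma neg1_pow_cases k : (-1) ^ k = 1 \/ (-1) ^ k = -1.
Proof.
  induction k as [|k [E|E]]; simpl; [auto| |]; rewrite ?E; [right|left]; ring.
Qed.

Lemma lemma3_fun_eq_pole_regular_part k s : 0 < Rabs (s - (/ 2 + INR k)) < / 2 ->
  (s - / 2 - INR k) * Gamma (/ 2 - s) = pole_regular_part k (/ 2 + INR k - s).
Proof.
  intros Hs. set (u := / 2 + INR k - s).
  assert (Hu : 0 < Rabs u < 1).
  { unfold u. rewrite <- Rabs_Ropp. replace (- (/ 2 + INR k - s)) with (s - (/ 2 + INR k)) by ring.
    lra. }
  replace (/ 2 - s) with (u - INR k) by (unfold u; ring).
  replace (s - / 2 - INR k) with (- u) by (unfold u; ring).
  rewrite Gamma_sub_INR by auto.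
  unfold pole_regular_part. rewrite prod_fun_pole_factor, rising_sub_INR.
  assert (Hu1 : u < 1) by (destruct Hu as [_ Hu1]; apply Rabs_def2 in Hu1; lra).
  pose proof (pole_denominator_pos k u Hu1).
  assert (Hu0 : u <> 0) by (intros E; rewrite E, Rabs_R0 in Hu; lra).
  rewrite pow_add, pow_1.
  destruct (neg1_pow_cases k) as [E|E]; rewrite E; field; split; lra.
Qed.

Lemma Derive_n_lemma3_fun k j y : 0 < Rabs (y - (/ 2 + INR k)) < / 2 ->
  Derive_n (fun s => (s - / 2 - INR k) * Gamma (/ 2 - s)) j y
  = (-1) ^ j * Derive_n (pole_regular_part k) j (/ 2 + INR k - y).
Proof.
  set (s0 := / 2 + INR k). intros Hy.
  pose proof (Rabs_def2 _ _ (proj2 Hy)) as Hy'.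
  rewrite (Derive_n_ext_loc _ (fun z => pole_regular_part k (s0 - z))).
  - apply Derive_n_reflect with (- / 2) (/ 2); [apply smooth_on_pole_regular_part | lra].
  - destruct (Rlt_dec y s0) as [Hlt|Hge].
    + apply locally_interval with (s0 - / 2) s0; simpl; try lra.
      intros z Hz1 Hz2. apply lemma3_fun_eq_pole_regular_part. fold s0.
      split; [apply Rabs_pos_lt | apply Rabs_def1]; lra.
    + assert (y <> s0) by (intros E; rewrite E, Rminus_diag, Rabs_R0 in Hy; lra).
      apply locally_interval with s0 (s0 + / 2); simpl; try lra.
      intros z Hz1 Hz2. apply lemma3_fun_eq_pole_regular_part. fold s0.
      split; [apply Rabs_pos_lt | apply Rabs_def1]; lra.
Qed.

Theorem lemma3 (k j : nat) (hj : (1 <= j)%nat) :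
  is_lim (Derive_n (fun s => (s - / 2 - INR k) * Gamma (/ 2 - s)) j)
         (/ 2 + INR k) (lemma3_rhs k j).
Proof.
  set (s0 := / 2 + INR k).
  set (g := fun s => (-1) ^ j * Derive_n (pole_regular_part k) j (s0 - s)).
  assert (Hg : is_lim g s0 (g s0)).
  { apply is_lim_continuity, continuity_pt_filterlim.
    apply (@ex_derive_continuous R_AbsRing R_NormedModule), ex_derive_scal.
    apply (@ex_derive_comp R_AbsRing R_NormedModule (Derive_n (pole_regular_part k) j)).
    - rewrite Rminus_diag. apply smooth_on_pole_regular_part. lra.
    - auto_derive. auto. }
  replace (lemma3_rhs k j) with (g s0).
  - apply is_lim_ext_loc with g; [|exact Hg].
    exists (mkposreal (/ 2) ltac:(lra)). intros y Hy Hne. symmetry.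
    apply Derive_n_lemma3_fun. split; [apply Rabs_pos_lt, Rminus_eq_contra, Hne | exact Hy].
  - unfold g, lemma3_rhs. rewrite Rminus_diag, Derive_n_pole_regular_part_0.
    assert (Hsign : (-1) ^ j * (-1) ^ (k + 1) = (-1) ^ (k + j - 1)).
    { rewrite <- pow_add. replace (j + (k + 1))%nat with ((k + j - 1) + 2)%nat by lia.
      rewrite pow_add. simpl. ring. }
    rewrite <- Hsign. ring.
Qed.
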